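(* Let $\mathbf{E},\mathbf{F}$ be finite-dimensional Euclidean spaces, $\mathcal{K}\subset\mathbf{E}$ a proper cone, $\mathcal{A}:\mathbf{E}\to\mathbf{F}$ a surjective linear map, $b\in\mathbf{F}$, $c\in\mathbf{E}$, and consider the conic program (P) $\min\{\langle c,x\rangle:\mathcal{A}x=b,\ x\in\mathcal{K}\}$ with optimal value $p_\star$ and solution set $\mathcal{X}_\star$. Suppose primal and dual Slater's condition holds: there are $x_0\in\mathrm{int}(\mathcal{K})$ with $\mathcal{A}x_0=b$ and $y_0\in\mathbf{F}$ with $c-\mathcal{A}^*y_0\in\mathrm{int}(\mathcal{K}^* )$. For a perturbation $\Delta=(\Delta\mathcal{A},\Delta b,\Delta c)$ let (P') be $\min\{\langle c+\Delta c,x\rangle:(\mathcal{A}+\Delta\mathcal{A})x=b+\Delta b,\ x\in\mathcal{K}\}$ with solution set $\mathcal{X}_\star'$, and $\|\Delta\|=\|\Delta\mathcal{A}\|_{\mathrm{op}}+\|\Delta b\|_2+\|\Delta c\|_2$. Then for every sufficiently small $\varepsilon>0$ there is a constant $\bar c$ such that for all $\Delta$ with $\|\Delta\|\le\varepsilon$ and every optimal solution $x_\star'$ of (P'), $$\max\{\epsilon_{\mathrm{opt}}(x_\star'),\ \|\mathcal{A}(x_\star')-b\|_2\}\le\bar c\|\Delta\|.$$ Consequently, if there are constants $c_1,c_2,c_3\ge0$ and $p>0$ such that $\mathrm{dist}(x,\mathcal{X}_\star)^p\le c_1|\epsilon_{\mathrm{opt}}(x)|+c_2\|\mathcal{A}x-b\|_2+c_3\|x_-\|_2$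 for all $x\in\mathbf{E}$, then there are constants $c_1',c_2',c_3'\ge0$ such that for all such $\Delta$, $\mathrm{dist}(\mathcal{X}_\star,\mathcal{X}_\star')^{p}\le c_1'\|\Delta c\|_2+c_2'\|\Delta\mathcal{A}\|_{\mathrm{op}}+c_3'\|\Delta b\|_2$.
   Context: $\mathcal{K}^*$ is the dual cone of $\mathcal{K}$. $\epsilon_{\mathrm{opt}}(x)=\langle c,x\rangle-p_\star$ is suboptimality with respect to the original (unperturbed) data. $x_-=x-P_{\mathcal{K}}(x)$ with $P_{\mathcal{K}}$ the Euclidean projection onto $\mathcal{K}$. $\mathrm{dist}(x,\mathcal{X}_\star)=\inf_{z\in\mathcal{X}_\star}\|x-z\|_2$ and $\mathrm{dist}(\mathcal{X}_\star,\mathcal{X}_\star')=\inf_{x\in\mathcal{X}_\star,x'\in\mathcal{X}_\star'}\|x-x'\|_2$. $\|\cdot\|_{\mathrm{op}}$ is the operator norm of a linear map. *)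

(* Euclidean spaces E = R^n, F = R^m as
   column vectors with the standard inner product. *)
From HB Require Import structures.
From mathcomp Require Import all_boot all_order all_algebra.
From mathcomp Require Import all_classical all_reals all_analysis.
Set Implicit Arguments. Unset Strict Implicit. Unset Printing Implicit Defensive.
Import Order.TTheory GRing.Theory Num.Theory.
Local Open Scope classical_set_scope.
Local Open Scope ring_scope.

Section Conic.
Variable R : realType.

Definition dotv n (x y : 'cV[R]_n) : R := \sum_(i < n) x i 0 * y i 0.
Definition norm2 n (x : 'cV[R]_n) : R := Num.sqrt (dotv x x).

Definition opnorm m n (A : 'M[R]_(m, n)) : R :=
  sup [set norm2 (A *m x) | x in [set x : 'cV[R]_n | norm2 x <= 1]].

Definition interior2 n (K : set 'cV[R]_n) : set 'cV[R]_n :=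
  [set x | exists2 r : R, 0 < r & forall z, norm2 (z - x) < r -> K z].

Definition closed2 n (K : set 'cV[R]_n) : Prop :=
  forall x, (forall r : R, 0 < r -> exists2 z, K z & norm2 (z - x) < r) -> K x.

Definition proper_cone n (K : set 'cV[R]_n) : Prop :=
  K 0 /\
  (forall (t : R) x, 0 <= t -> K x -> K (t *: x)) /\
  (forall (t : R) x y, 0 <= t <= 1 -> K x -> K y -> K (t *: x + (1 - t) *: y)) /\
  closed2 K /\
  (forall x, K x -> K (- x) -> x = 0) /\
  (exists x, interior2 K x).

Definition dual_cone n (K : set 'cV[R]_n) : set 'cV[R]_n :=
  [set y | forall x, K x -> 0 <= dotv x y].

Definition feasible m n (K : set 'cV[R]_n) (A : 'M[R]_(m, n)) (b : 'cV[R]_m) :=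
  [set x | A *m x = b /\ K x].

Definition opt_value m n (K : set 'cV[R]_n) (A : 'M[R]_(m, n)) (b : 'cV[R]_m)
  (c : 'cV[R]_n) : R := inf [set dotv c x | x in feasible K A b].

Definition sol_set m n (K : set 'cV[R]_n) (A : 'M[R]_(m, n)) (b : 'cV[R]_m)
  (c : 'cV[R]_n) : set 'cV[R]_n :=
  [set x | feasible K A b x /\ forall z, feasible K A b z -> dotv c x <= dotv c z].

Definition eps_opt m n (K : set 'cV[R]_n) (A : 'M[R]_(m, n)) (b : 'cV[R]_m)
  (c : 'cV[R]_n) (x : 'cV[R]_n) : R := dotv c x - opt_value K A b c.

Definition projK n (K : set 'cV[R]_n) (x : 'cV[R]_n) : 'cV[R]_n :=
  xget 0 [set z | K z /\ forall w, K w -> norm2 (x - z) <= norm2 (x - w)].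
Definition xminus n (K : set 'cV[R]_n) (x : 'cV[R]_n) := x - projK K x.

(* distances as extended reals (inf over the empty set is +oo) *)
Definition dist_pt n (x : 'cV[R]_n) (X : set 'cV[R]_n) : \bar R :=
  ereal_inf [set (norm2 (x - z))%:E | z in X].
Definition dist_set n (X Y : set 'cV[R]_n) : \bar R :=
  ereal_inf [set (norm2 (x - y))%:E | x in X & y in Y].

End Conic.

From HB Require Import structures.
From mathcomp Require Import all_boot all_order all_algebra.
From mathcomp Require Import all_classical all_reals all_analysis.
From mathcomp Require Import ring lra.
Import Order.TTheory GRing.Theory Num.Theory.
Import numFieldNormedType.Exports.
Local Open Scope classical_set_scope.
Local Open Scope ring_scope.
Set Implicit Arguments. Unset Strict Implicit. Unset Printing Implicit Defensive.

(* Dual Slater makes the Lagrangian slack <c, x> - <A x, y0> coercive on K, so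
   the sublevel sets of the original problem and of every slightly perturbed
   one are uniformly bounded; by compactness the perturbed problem is solvable.
   Primal Slater yields feasibility restoration: from x in K, move a fraction t
   of the way to the interior point x0 and cancel the residual with a bounded
   right inverse of A (or of A + dA, a near-identity perturbation of it); the
   ball of radius t r0 around t x0 absorbs this correction, so the new point is
   feasible, in K, and O(residual) away from x.  Restoring original points into
   the perturbed problem bounds <c, x*'> by p* + O(|Delta|); restoring x*' into
   the original problem bounds it from below, and its residual is O(|Delta|)
   because x*' stays bounded.  Finally x*' is in K, so x*'_- = 0, and the error
   bound at x*' controls dist(X*, X*'). *)

Section Euclidean.
Variable R : realType.
Implicit Types (n : nat).

Lemma dotvC n (x y : 'cV[R]_n) : dotv x y = dotv y x.
Proof. by apply: eq_bigr => i _; rewrite mulrC. Qed.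

Lemma dotvDl n (x y z : 'cV[R]_n) : dotv (x + y) z = dotv x z + dotv y z.
Proof. by rewrite /dotv -big_split; apply: eq_bigr => i _; rewrite !mxE mulrDl. Qed.

Lemma dotvZl n a (x z : 'cV[R]_n) : dotv (a *: x) z = a * dotv x z.
Proof. by rewrite /dotv mulr_sumr; apply: eq_bigr => i _; rewrite !mxE mulrA. Qed.

Lemma dotvNl n (x z : 'cV[R]_n) : dotv (- x) z = - dotv x z.
Proof. by rewrite -scaleN1r dotvZl mulN1r. Qed.

Lemma dotvBl n (x y z : 'cV[R]_n) : dotv (x - y) z = dotv x z - dotv y z.
Proof. by rewrite dotvDl dotvNl. Qed.

Lemma dotvDr n (x y z : 'cV[R]_n) : dotv z (x + y) = dotv z x + dotv z y.
Proof. by rewrite !(dotvC z) dotvDl. Qed.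

Lemma dotvZr n a (x z : 'cV[R]_n) : dotv z (a *: x) = a * dotv z x.
Proof. by rewrite !(dotvC z) dotvZl. Qed.

Lemma dotvBr n (x y z : 'cV[R]_n) : dotv z (x - y) = dotv z x - dotv z y.
Proof. by rewrite !(dotvC z) dotvBl. Qed.

Lemma dotv0l n (z : 'cV[R]_n) : dotv 0 z = 0.
Proof. by rewrite /dotv big1 // => i _; rewrite mxE mul0r. Qed.

Lemma dotv_trmx m n (A : 'M[R]_(m, n)) x y : dotv x (A^T *m y) = dotv (A *m x) y.
Proof.
rewrite /dotv; under eq_bigr => i _ do rewrite mxE mulr_sumr.
rewrite exchange_big /=; apply: eq_bigr => j _; rewrite mxE mulr_suml.
by apply: eq_bigr => i _; rewrite mxE; ring.
Qed.

Lemma dotvv_ge0 n (x : 'cV[R]_n) : 0 <= dotv x x.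
Proof. by apply: sumr_ge0 => i _; rewrite -expr2 sqr_ge0. Qed.

Lemma dotvv_eq0 n (x : 'cV[R]_n) : dotv x x = 0 -> x = 0.
Proof.
move=> /eqP; rewrite psumr_eq0 => [/allP x0|i _]; last by rewrite -expr2 sqr_ge0.
apply/matrixP => i j; rewrite (ord1 j) mxE.
by have /x0 := mem_index_enum i; rewrite /= mulf_eq0 orbb => /eqP.
Qed.

Lemma norm2_ge0 n (x : 'cV[R]_n) : 0 <= norm2 x.
Proof. exact: sqrtr_ge0. Qed.

Lemma sqr_norm2 n (x : 'cV[R]_n) : norm2 x ^+ 2 = dotv x x.
Proof. by rewrite sqr_sqrtr // dotvv_ge0. Qed.

Lemma norm2_le0 n (x : 'cV[R]_n) : norm2 x <= 0 -> x = 0.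
Proof.
move=> x0; apply: dotvv_eq0; rewrite -sqr_norm2.
have /eqP -> : norm2 x == 0 by rewrite eq_le x0 norm2_ge0.
by rewrite expr0n.
Qed.

Lemma norm2_0 n : norm2 (0 : 'cV[R]_n) = 0.
Proof. by rewrite /norm2 dotv0l sqrtr0. Qed.

Lemma norm2Z n a (x : 'cV[R]_n) : norm2 (a *: x) = `|a| * norm2 x.
Proof. by rewrite /norm2 dotvZl dotvZr mulrA -expr2 sqrtrM ?sqr_ge0 // sqrtr_sqr. Qed.

Lemma norm2N n (x : 'cV[R]_n) : norm2 (- x) = norm2 x.
Proof. by rewrite -scaleN1r norm2Z normrN1 mul1r. Qed.

Lemma norm2_distC n (x y : 'cV[R]_n) : norm2 (x - y) = norm2 (y - x).
Proof. by rewrite -norm2N opprB. Qed.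

Lemma cauchy_schwarz n (x y : 'cV[R]_n) : `|dotv x y| <= norm2 x * norm2 y.
Proof.
have [x0|xn0] := eqVneq (dotv x x) 0.
  by rewrite (dotvv_eq0 x0) dotv0l normr0 mulr_ge0 ?norm2_ge0.
set X := dotv x x; set P := dotv x y; set Y := dotv y y.
have Xp : 0 < X by rewrite lt_def xn0 dotvv_ge0.
have : 0 <= dotv (X *: y - P *: x) (X *: y - P *: x) by exact: dotvv_ge0.
rewrite !(dotvBl, dotvBr, dotvZl, dotvZr) (dotvC y x) -/X -/Y -/P => h.
have PXY : P ^+ 2 <= X * Y by nra.
rewrite -sqrtr_sqr /norm2 -sqrtrM ?dotvv_ge0 //.
by rewrite ler_sqrt // mulr_ge0 ?dotvv_ge0.
Qed.

Lemma dotv_le n (x y : 'cV[R]_n) : dotv x y <= norm2 x * norm2 y.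
Proof. exact: le_trans (ler_norm _) (cauchy_schwarz x y). Qed.

Lemma ler_norm2D n (x y : 'cV[R]_n) : norm2 (x + y) <= norm2 x + norm2 y.
Proof.
rewrite -(ler_pXn2r (n:=2)) ?nnegrE ?addr_ge0 ?norm2_ge0 //.
rewrite sqr_norm2 dotvDl !dotvDr (dotvC y x) sqrrD !sqr_norm2.
have := dotv_le x y; lra.
Qed.

Lemma norm2_conv n t (x y : 'cV[R]_n) : 0 <= t <= 1 ->
  norm2 ((1 - t) *: x + t *: y) <= (1 - t) * norm2 x + t * norm2 y.
Proof.
move=> /andP[t0 t1]; apply: le_trans (ler_norm2D _ _) _.
by rewrite !norm2Z !ger0_norm ?subr_ge0.
Qed.

Lemma ler_norm2_sum n (x : 'cV[R]_n) : norm2 x <= \sum_i `|x i 0|.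
Proof.
have S0 : 0 <= \sum_i `|x i 0| by apply: sumr_ge0.
rewrite -(ler_pXn2r (n:=2)) ?nnegrE ?norm2_ge0 // sqr_norm2 expr2 mulr_sumr.
apply: ler_sum => i _; rewrite -[x i 0 * x i 0]real_normK ?num_real // expr2.
by apply: ler_wpM2r => //; rewrite (bigD1 i) //= lerDl sumr_ge0.
Qed.

Lemma ler_coord_norm2 n (x : 'cV[R]_n) i : `|x i 0| <= norm2 x.
Proof.
rewrite -(ler_pXn2r (n:=2)) ?nnegrE ?norm2_ge0 // sqr_norm2 real_normK ?num_real //.
by rewrite /dotv (bigD1 i) //= -expr2 lerDl sumr_ge0 // => j _; rewrite -expr2 sqr_ge0.
Qed.

End Euclidean.

Section OperatorNorm.
Variable R : realType.

Lemma mulmx_norm2_bounded m n (M : 'M[R]_(m, n)) :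
  exists2 C, 0 <= C & forall x, norm2 (M *m x) <= C * norm2 x.
Proof.
exists (\sum_i norm2 (row i M)^T); first by apply: sumr_ge0 => i _; exact: norm2_ge0.
move=> x; apply: le_trans (ler_norm2_sum _) _; rewrite mulr_suml; apply: ler_sum => i _.
have -> : (M *m x) i 0 = dotv (row i M)^T x by rewrite mxE; apply: eq_bigr => j _; rewrite !mxE.
exact: cauchy_schwarz.
Qed.

Lemma opnorm_ub m n (M : 'M[R]_(m, n)) x : norm2 x <= 1 -> norm2 (M *m x) <= opnorm M.
Proof.
move=> x1; have [C C0 MC] := mulmx_norm2_bounded M.
apply: sup_upper_bound; last by exists x.
split; first by exists (norm2 (M *m x)), x.
exists C => _ [y /= y1 <-]; apply: le_trans (MC y) _.
by rewrite -[leRHS]mulr1 ler_wpM2l.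
Qed.

Lemma opnorm_ge0 m n (M : 'M[R]_(m, n)) : 0 <= opnorm M.
Proof. by apply: le_trans (norm2_ge0 (M *m 0)) (opnorm_ub _ _); rewrite norm2_0. Qed.

Lemma norm2_mulmx_le m n (M : 'M[R]_(m, n)) x : norm2 (M *m x) <= opnorm M * norm2 x.
Proof.
have [/norm2_le0 ->|xp] := leP (norm2 x) 0; first by rewrite mulmx0 !norm2_0 mulr0.
have := opnorm_ub M (x := (norm2 x)^-1 *: x).
rewrite -scalemxAr !norm2Z ger0_norm ?invr_ge0 ?norm2_ge0 // mulVf ?gt_eqF //.
by rewrite mulrC ler_pdivrMr // => /(_ (lexx _)).
Qed.

End OperatorNorm.

Lemma surjective_mx_rinv (F : pzRingType) m n (A : 'M[F]_(m, n)) :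
  (forall y : 'cV[F]_m, exists x, A *m x = y) -> exists B : 'M[F]_(n, m), A *m B = 1%:M.
Proof.
move=> Asurj; pose f j := projT1 (cid (Asurj (delta_mx j 0))).
have Af j : A *m f j = delta_mx j 0 by rewrite /f; case: cid.
exists (\matrix_(k, j) f j k 0); apply/matrixP => i j.
have := congr1 (fun v : 'cV[F]_m => v i 0) (Af j); rewrite !mxE eqxx andbT => <-.
by apply: eq_bigr => k _; rewrite !mxE.
Qed.

Section Solvability.
Variable R : realType.

Definition solvable_with m n (M : 'M[R]_(m, n)) (gamma : R) :=
  forall w, exists2 u, M *m u = w & norm2 u <= gamma * norm2 w.

Lemma solvable_with_rinv m n (A : 'M[R]_(m, n)) (B : 'M[R]_(n, m)) beta :
  A *m B = 1%:M -> (forall y, norm2 (B *m y) <= beta * norm2 y) -> solvable_with A beta.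
Proof. by move=> AB Bbeta w; exists (B *m w); [rewrite mulmxA AB mul1mx | exact: Bbeta]. Qed.

Lemma solvable_with_near_id m (N : 'M[R]_m) :
  (forall v, norm2 (N *m v) <= norm2 v / 2) -> solvable_with (1%:M + N) 2.
Proof.
move=> Nv; have v_eqN v : (1%:M + N) *m v = 0 -> v = - (N *m v).
  by rewrite mulmxDl mul1mx => /eqP; rewrite addr_eq0 => /eqP.
have unitM : 1%:M + N \in unitmx.
  rewrite -unitmx_tr -row_free_unit; apply: inj_row_free => v vM0.
  have /v_eqN vN : (1%:M + N) *m v^T = 0 by rewrite -[LHS]trmxK trmx_mul trmxK vM0 trmx0.
  have NvT : norm2 (N *m v^T) = norm2 v^T by rewrite -norm2N -vN.
  have : norm2 v^T <= 0 by have := Nv v^T; rewrite NvT; have := norm2_ge0 v^T; lra.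
  by move/norm2_le0/(congr1 trmx); rewrite trmxK trmx0.
move=> w; exists (invmx (1%:M + N) *m w); first by rewrite mulKVmx.
set v := _ *m w; have vE : v = w - N *m v by rewrite -[w](mulKVmx unitM) -/v mulmxDl mul1mx addrK.
have := ler_norm2D w (- (N *m v)); rewrite norm2N -vE; have := Nv v; lra.
Qed.

Lemma solvable_with_mulmxr m n p (M : 'M[R]_(m, n)) (B : 'M[R]_(n, p)) beta gamma :
  0 <= beta -> (forall y, norm2 (B *m y) <= beta * norm2 y) ->
  solvable_with (M *m B) gamma -> solvable_with M (beta * gamma).
Proof.
move=> beta0 Bbeta MB w; have [v MBv vw] := MB w.
exists (B *m v); first by rewrite mulmxA.
by apply: le_trans (Bbeta v) _; rewrite -mulrA ler_wpM2l.
Qed.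

Lemma solvable_with_perturbed m n (A dA : 'M[R]_(m, n)) (B : 'M[R]_(n, m)) beta :
  A *m B = 1%:M -> 0 <= beta -> (forall y, norm2 (B *m y) <= beta * norm2 y) ->
  2 * beta * opnorm dA <= 1 -> solvable_with (A + dA) (beta * 2).
Proof.
move=> AB beta0 Bbeta small; apply: solvable_with_mulmxr => //.
rewrite mulmxDl AB; apply: solvable_with_near_id => v.
rewrite -mulmxA; apply: le_trans (norm2_mulmx_le _ _) _.
have := ler_wpM2l (opnorm_ge0 dA) (Bbeta v); have := norm2_ge0 v; nra.
Qed.

End Solvability.

Section Compactness.
Variables (R : realType) (n : nat).

(* Compactness in MathComp-Analysis is stated for row vectors with the max norm
   ([bounded_closed_compact]), hence the transposes below. *)

Lemma mx_norm_le_norm2 (v : 'rV[R]_n) : `|v| <= norm2 v^T.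
Proof.
rewrite [leLHS]/Num.norm /= mx_normrE; apply: bigmax_le => [|[i j] _]; first exact: norm2_ge0.
by rewrite (ord1 i); have := ler_coord_norm2 v^T j; rewrite mxE.
Qed.

Lemma norm2_le_mx_norm (v : 'rV[R]_n) : norm2 v^T <= n%:R * `|v|.
Proof.
apply: le_trans (ler_norm2_sum _) _.
have -> : n%:R * `|v| = \sum_(i < n) `|v| by rewrite sumr_const card_ord mulr_natl.
apply: ler_sum => i _.
rewrite mxE [leRHS]/Num.norm /= mx_normrE.
by apply/bigmax_geP; right; exists (0, i).
Qed.

Lemma dotv_trmx_continuous (c : 'cV[R]_n) : continuous (fun v : 'rV[R]_n => dotv c v^T).
Proof.
move=> v B /= /nbhs_ballP[e e0 eB]; apply/nbhs_ballP.
have k0 : 0 < norm2 c * n%:R + 1 by rewrite ltr_pwDr // mulr_ge0 ?norm2_ge0.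
exists (e / (norm2 c * n%:R + 1)) => [|u]; first exact: divr_gt0.
rewrite -!ball_normE /= ltr_pdivlMr // => vu; apply: eB.
rewrite -ball_normE /= -dotvBr -raddfB /=; apply: le_lt_trans (cauchy_schwarz _ _) _.
apply: le_lt_trans (ler_wpM2l (norm2_ge0 c) (norm2_le_mx_norm _)) _.
have := normr_ge0 (v - u); nra.
Qed.

Lemma closed_trmx_preimage (S : set 'cV[R]_n) : closed2 S -> closed [set v : 'rV_n | S v^T].
Proof.
move=> Scl v vcl; apply: Scl => r r0.
have k0 : 0 < n%:R + 1 :> R by rewrite ltr_pwDr.
have [u [Su vu]] := vcl _ (nbhsx_ballx v (r / (n%:R + 1)) (divr_gt0 r0 k0)).
exists u^T => //; rewrite -raddfB /=; apply: le_lt_trans (norm2_le_mx_norm _) _.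
move: vu; rewrite -ball_normE /= distrC ltr_pdivlMr // => vu.
have := normr_ge0 (u - v); nra.
Qed.

Lemma bounded_trmx_preimage (S : set 'cV[R]_n) M :
  (forall x, S x -> norm2 x <= M) -> bounded_set [set v : 'rV_n | S v^T].
Proof.
move=> SM; exists M; split => [|N MN v Sv]; first exact: num_real.
exact: le_trans (mx_norm_le_norm2 v) (le_trans (SM _ Sv) (ltW MN)).
Qed.

Lemma linear_min_attained (S : set 'cV[R]_n) (c : 'cV[R]_n) M :
  closed2 S -> S !=set0 -> (forall x, S x -> norm2 x <= M) ->
  exists2 xs, S xs & forall z, S z -> dotv c xs <= dotv c z.
Proof.
move=> Scl [x Sx] SM; pose S' := [set v : 'rV_n | S v^T].
have S'0 : S' !=set0 by exists x^T; rewrite /S' /= trmxK.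
have S'cpt : compact S'.
  by apply: bounded_closed_compact; [exact: bounded_trmx_preimage SM | exact: closed_trmx_preimage].
have [v /set_mem S'v vmin] := EVT_min_rV S'0 S'cpt
  (continuous_subspaceT (dotv_trmx_continuous (c := c))).
exists v^T => // z Sz; have := vmin z^T; rewrite trmxK; apply.
by rewrite inE /S' /= trmxK.
Qed.

Lemma closed2I (S T : set 'cV[R]_n) : closed2 S -> closed2 T -> closed2 (S `&` T).
Proof.
move=> Scl Tcl x xcl; split.
  by apply: Scl => r r0; have [z [Sz _] zx] := xcl r r0; exists z.
by apply: Tcl => r r0; have [z [_ Tz] zx] := xcl r r0; exists z.
Qed.

Lemma closed2_sublevel (f : 'cV[R]_n -> R) k : 0 <= k ->
  (forall x z, f x - f z <= k * norm2 (x - z)) -> closed2 [set x | f x <= 0].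
Proof.
move=> k0 fk x xcl; apply/ler_addgt0Pr => e e0; rewrite add0r.
have k1 : 0 < k + 1 by rewrite ltr_pwDr.
have [z /= fz] := xcl _ (divr_gt0 e0 k1); rewrite norm2_distC ltr_pdivlMr // => zx.
have := fk x z; have := norm2_ge0 (x - z); nra.
Qed.

Lemma closed2_halfspace (c : 'cV[R]_n) a : closed2 [set x | dotv c x <= a].
Proof.
have -> : [set x | dotv c x <= a] = [set x | dotv c x - a <= 0].
  by apply/funext => x; rewrite /= subr_le0.
apply: (closed2_sublevel (norm2_ge0 c)) => x z.
by rewrite opprB addrA subrK -dotvBr dotv_le.
Qed.

Lemma closed2_feasible m (K : set 'cV[R]_n) (A : 'M[R]_(m, n)) b :
  closed2 K -> closed2 (feasible K A b).
Proof.
move=> Kcl; have -> : feasible K A b = [set x | norm2 (A *m x - b) <= 0] `&` K.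
  apply/seteqP; split=> x /= [Ax Kx]; split => //; first by rewrite Ax subrr norm2_0.
  by apply/eqP; rewrite -subr_eq0; apply/eqP/norm2_le0.
apply: closed2I => //; apply: (closed2_sublevel (opnorm_ge0 A)) => x z.
rewrite lerBlDr.
have -> : A *m x - b = A *m (x - z) + (A *m z - b) by rewrite mulmxBr addrA subrK.
apply: le_trans (ler_norm2D _ _) _; rewrite lerD2r; exact: norm2_mulmx_le.
Qed.

End Compactness.

Lemma mul_le1_of_le_inv (F : realFieldType) (s k d : F) :
  0 < s -> 0 <= d -> k <= s -> d <= s^-1 -> k * d <= 1.
Proof.
move=> s0 d0 ks ds; apply: le_trans (ler_wpM2r d0 ks) _.
by rewrite -(mulfV (lt0r_neq0 s0)) ler_wpM2l // ltW.
Qed.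

Section Slater.
Variables (R : realType) (m n : nat).
Variables (K : set 'cV[R]_n) (A : 'M[R]_(m, n)) (b : 'cV[R]_m) (c : 'cV[R]_n).
Hypothesis Kproper : proper_cone K.
Variables (x0 : 'cV[R]_n) (r0 : R) (y0 : 'cV[R]_m) (r1 : R).
Hypotheses (r0_gt0 : 0 < r0) (r1_gt0 : 0 < r1).
Hypothesis ball_x0 : forall z, norm2 (z - x0) < r0 -> K z.
Hypothesis Ax0 : A *m x0 = b.
Hypothesis ball_s0 : forall z, norm2 (z - (c - A^T *m y0)) < r1 -> dual_cone K z.

Lemma K_x0 : K x0.
Proof. by apply: ball_x0; rewrite subrr norm2_0. Qed.

Lemma K_conv x y t : K x -> K y -> 0 <= t <= 1 -> K ((1 - t) *: x + t *: y).
Proof.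
case: Kproper => _ [_ [Kconv _]] Kx Ky /andP[t0 t1].
have := Kconv (1 - t) x y; rewrite [1 - (1 - t)](_ : _ = t); last by ring.
by apply => //; apply/andP; lra.
Qed.

(* [x0 + u / t] lies in the ball around [x0]. *)
Lemma K_conv_ball x t u : K x -> 0 <= t <= 1 -> norm2 u <= t * r0 / 2 ->
  K ((1 - t) *: x + t *: x0 + u).
Proof.
move=> Kx /andP[t0 t1] ut; have [t0E|tn0] := eqVneq t 0.
  move: ut; rewrite t0E !mul0r => /norm2_le0 ->.
  by rewrite addr0 scale0r addr0 subr0 scale1r.
have tp : 0 < t by rewrite lt_def tn0.
have Kxu : K (x0 + t^-1 *: u).
  apply: ball_x0; rewrite addrC addKr norm2Z ger0_norm ?invr_ge0 // mulrC ltr_pdivrMr //.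
  by apply: le_lt_trans ut _; rewrite mulrC; have := mulr_gt0 tp r0_gt0; lra.
have := K_conv Kx Kxu (t := t); rewrite t0 t1 => /(_ isT).
by rewrite scalerDr scalerA mulfV // scale1r addrA.
Qed.

(* The restored point is [(1 - t) x + t x0 + u] with [t := 2 gamma rho / r0] and
   [M u] the residual of [(1 - t) x + t x0]. *)
Lemma cone_restore p (M : 'M[R]_(p, n)) (target : 'cV[R]_p) gamma rho x :
  solvable_with M gamma -> 0 <= gamma -> K x -> 2 * gamma * rho <= r0 ->
  (forall t, 0 <= t <= 1 -> norm2 (target - M *m ((1 - t) *: x + t *: x0)) <= rho) ->
  exists2 z, K z /\ M *m z = target &
    norm2 (z - x) <= gamma * rho * (2 / r0 * norm2 (x0 - x) + 1).
Proof.
move=> Msolv gamma0 Kx small res.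
have rho0 : 0 <= rho by apply: le_trans (res 0 _); rewrite ?norm2_ge0 ?lexx ?ler01.
pose t := 2 * gamma * rho / r0.
have t01 : 0 <= t <= 1.
  by rewrite /t divr_ge0 ?(ltW r0_gt0) ?mulr_ge0 //= ler_pdivrMr // mul1r.
pose xt := (1 - t) *: x + t *: x0; have [u Mu uw] := Msolv (target - M *m xt).
have ut : norm2 u <= gamma * rho by apply: le_trans uw (ler_wpM2l gamma0 (res _ t01)).
exists (xt + u); first split.
- apply: K_conv_ball => //; apply: le_trans ut _.
  by rewrite /t divfK ?gt_eqF //; lra.
- by rewrite mulmxDr Mu addrC subrK.
have -> : xt + u - x = t *: (x0 - x) + u.
  by apply/matrixP => i j; rewrite !mxE; ring.
apply: le_trans (ler_norm2D _ _) _; rewrite norm2Z ger0_norm; last by case/andP: t01.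
have -> : t * norm2 (x0 - x) = gamma * rho * (2 / r0 * norm2 (x0 - x)) by rewrite /t; ring.
by rewrite mulrDr mulr1 lerD2l.
Qed.

(* The factor [1/2] comes from the ball around [c - A^T y0] being open. *)
Lemma lagrangian_coercive x : K x -> r1 / 2 * norm2 x <= dotv c x - dotv (A *m x) y0.
Proof.
move=> Kx; rewrite -dotv_trmx (dotvC c) -dotvBr; set s0 := c - _.
have [/norm2_le0 ->|xp] := leP (norm2 x) 0; first by rewrite norm2_0 mulr0 dotv0l.
have /(_ x Kx) : dual_cone K (s0 - (r1 / 2 / norm2 x) *: x).
  apply: ball_s0; rewrite addrC addKr norm2N norm2Z ger0_norm; last first.
    by rewrite !divr_ge0 ?norm2_ge0 ?ltW.
  by rewrite divfK ?gt_eqF //; have := r1_gt0; lra.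
by rewrite dotvBr dotvZr -sqr_norm2 expr2 mulrA divfK ?gt_eqF //; lra.
Qed.

Let R0 := 2 / r1 * `|dotv c x0 - dotv b y0|.

Lemma R0_ge0 : 0 <= R0.
Proof. by rewrite /R0 mulr_ge0 // divr_ge0 // ltW. Qed.

Lemma norm2_sublevel_le x : feasible K A b x -> dotv c x <= dotv c x0 -> norm2 x <= R0.
Proof.
move=> [Ax Kx] cx; have := lagrangian_coercive Kx; rewrite Ax => rx.
rewrite /R0 -invf_div ler_pdivlMl ?divr_gt0 //; apply: le_trans (ler_norm _).
by have := r1_gt0; lra.
Qed.

Lemma opt_value_le x : feasible K A b x -> opt_value K A b c <= dotv c x.
Proof.
move=> fx; apply: ge_inf; last by exists x.
exists (dotv b y0) => _ [z [Az Kz] <-]; have := lagrangian_coercive Kz; rewrite Az.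
by have := mulr_ge0 (ltW r1_gt0) (norm2_ge0 z); lra.
Qed.

Lemma opt_value_ge v : (forall x, feasible K A b x -> v <= dotv c x) -> v <= opt_value K A b c.
Proof.
move=> vc; apply: lb_le_inf; first by exists (dotv c x0), x0 => //; split=> //; exact: K_x0.
by move=> _ [z fz <-]; exact: vc.
Qed.

Lemma norm2_x0_le : norm2 x0 <= R0.
Proof. exact: norm2_sublevel_le (conj Ax0 K_x0) (lexx _). Qed.

Variables (B : 'M[R]_(n, m)) (beta : R).
Hypotheses (AB : A *m B = 1%:M) (beta_ge0 : 0 <= beta).
Hypothesis Bbeta : forall y, norm2 (B *m y) <= beta * norm2 y.

Let Crestore := beta * 2 * (1 + R0) * (2 / r0 * (2 * R0) + 1).
Let Crestore_ge0 : 0 <= Crestore.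
Proof.
have R00 := R0_ge0; have r00 := ltW r0_gt0.
by rewrite /Crestore !mulr_ge0 ?addr_ge0 ?divr_ge0 ?mulr_ge0 ?invr_ge0 // ltW.
Qed.

Let Rsol := 4 / r1 * ((norm2 c + 1) * (R0 + Crestore) + `|dotv b y0| + norm2 y0).
Let Rsol_ge0 : 0 <= Rsol.
Proof.
have R00 := R0_ge0; have r10 := ltW r1_gt0.
by rewrite /Rsol mulr_ge0 ?divr_ge0 // !addr_ge0 ?mulr_ge0 ?addr_ge0 ?norm2_ge0.
Qed.

Let Cresid := 1 + Rsol.
Let Cup := norm2 c * Crestore + R0 + Crestore + Rsol.
Let Clow := norm2 c * (beta * Cresid * (2 / r0 * (R0 + Rsol) + 1)).

Section Perturbation.
Variables (dA : 'M[R]_(m, n)) (db : 'cV[R]_m) (dc : 'cV[R]_n) (d : R).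
Hypotheses (dA_le : opnorm dA <= d) (db_le : norm2 db <= d) (dc_le : norm2 dc <= d).
Local Notation feasible' := (feasible K (A + dA) (b + db)).
Local Notation sol' := (sol_set K (A + dA) (b + db) (c + dc)).

Let d_ge0 : 0 <= d. Proof. exact: le_trans (opnorm_ge0 dA) dA_le. Qed.

Lemma norm2_db_dA_le z : norm2 (db - dA *m z) <= d * (1 + norm2 z).
Proof.
apply: le_trans (ler_norm2D _ _) _; rewrite norm2N mulrDr mulr1 lerD //.
exact: le_trans (norm2_mulmx_le _ _) (ler_wpM2r (norm2_ge0 z) dA_le).
Qed.

Hypothesis small_solve : 2 * beta * d <= 1.
Hypothesis small_restore : 4 * beta * (1 + R0) / r0 * d <= 1.

Lemma perturbed_restore x : feasible K A b x -> norm2 x <= R0 ->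
  exists2 x', feasible' x' & norm2 (x' - x) <= Crestore * d.
Proof.
move=> [Ax Kx] xR0.
have solv : solvable_with (A + dA) (beta * 2).
  apply: (solvable_with_perturbed AB beta_ge0 Bbeta); apply: le_trans _ small_solve.
  by rewrite ler_wpM2l // mulr_ge0.
have [|||z [Kz Az] zx] := cone_restore (target := b + db) (rho := d * (1 + R0)) solv _ Kx.
- by rewrite mulr_ge0.
- by move: small_restore; rewrite mulrAC ler_pdivrMr // mul1r; lra.
- move=> t t01; rewrite mulmxDl mulmxDr -!scalemxAr Ax Ax0 -scalerDl subrK scale1r.
  rewrite opprD addrA [b + db]addrC addrK; apply: le_trans (norm2_db_dA_le _) _.
  rewrite ler_wpM2l // lerD2l; apply: le_trans (norm2_conv _ _ t01) _.
  by case/andP: t01 => t0 t1; have := norm2_x0_le; nra.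
exists z => //; apply: le_trans zx _.
have x0x : norm2 (x0 - x) <= 2 * R0.
  by apply: le_trans (ler_norm2D _ _) _; rewrite norm2N; have := norm2_x0_le; lra.
have k0 : 0 <= beta * 2 * (1 + R0) * d by rewrite !mulr_ge0 // addr_ge0 ?R0_ge0.
have -> : Crestore * d = beta * 2 * (1 + R0) * d * (2 / r0 * (2 * R0) + 1).
  by rewrite /Crestore; ring.
have -> : beta * 2 * (d * (1 + R0)) = beta * 2 * (1 + R0) * d by ring.
by rewrite ler_wpM2l // lerD2r ler_wpM2l // divr_ge0 // ltW.
Qed.

Hypothesis d_le1 : d <= 1.
Hypothesis small_coercive : 4 * (1 + norm2 y0) / r1 * d <= 1.

Lemma norm2_perturbed_sublevel z x' : feasible' z ->
  dotv (c + dc) z <= dotv (c + dc) x' -> norm2 x' <= R0 + Crestore -> norm2 z <= Rsol.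
Proof.
move=> [Az Kz] zx' x'R; have lag := lagrangian_coercive Kz.
have cz : dotv c z = dotv (c + dc) z - dotv dc z by rewrite dotvDl addrK.
have Azy0 : dotv (A *m z) y0 = dotv (b + db - dA *m z) y0.
  by rewrite -Az mulmxDl addrK.
rewrite !dotvBl dotvDl in Azy0.
have cx' : dotv (c + dc) x' <= (norm2 c + 1) * (R0 + Crestore).
  apply: le_trans (dotv_le _ _) (ler_pM (norm2_ge0 _) (norm2_ge0 _) _ x'R).
  by apply: le_trans (ler_norm2D _ _) _; rewrite lerD2l (le_trans dc_le).
have dcz : - dotv dc z <= d * norm2 z.
  by rewrite -dotvNl; apply: le_trans (dotv_le _ _) _; rewrite norm2N ler_wpM2r ?norm2_ge0.
have by0 : - dotv b y0 <= `|dotv b y0| by rewrite -normrN ler_norm.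
have dby0 : - dotv db y0 <= norm2 y0.
  rewrite -dotvNl; apply: le_trans (dotv_le _ _) _; rewrite norm2N.
  by rewrite -[leRHS]mul1r ler_wpM2r ?norm2_ge0 // (le_trans db_le).
have dAzy0 : dotv (dA *m z) y0 <= norm2 y0 * (d * norm2 z).
  apply: le_trans (dotv_le _ _) _; rewrite mulrC ler_wpM2l ?norm2_ge0 //.
  exact: le_trans (norm2_mulmx_le _ _) (ler_wpM2r (norm2_ge0 z) dA_le).
have small : (1 + norm2 y0) * d * norm2 z <= r1 / 4 * norm2 z.
  apply: ler_wpM2r; first exact: norm2_ge0.
  by move: small_coercive; rewrite mulrAC ler_pdivrMr // mul1r; lra.
by rewrite /Rsol mulrAC ler_pdivlMr //; lra.
Qed.

Lemma norm2_restored_le (x x' : 'cV[R]_n) :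
  norm2 x <= R0 -> norm2 (x' - x) <= Crestore * d -> norm2 x' <= R0 + Crestore.
Proof.
move=> xR0 x'x; rewrite -(subrK x x') addrC; apply: le_trans (ler_norm2D _ _) _.
by apply: lerD xR0 (le_trans x'x _); rewrite -[leRHS]mulr1 ler_wpM2l.
Qed.

Lemma perturbed_near_x0 : exists2 x0', feasible' x0' & norm2 x0' <= R0 + Crestore.
Proof.
have [x0' fx0' x0'x0] := perturbed_restore (conj Ax0 K_x0) norm2_x0_le.
by exists x0'; last exact: norm2_restored_le norm2_x0_le x0'x0.
Qed.

Lemma norm2_perturbed_sol xs : sol' xs -> norm2 xs <= Rsol.
Proof.
move=> [fxs xsmin]; have [x0' fx0' x0'R] := perturbed_near_x0.
exact: norm2_perturbed_sublevel fxs (xsmin _ fx0') x0'R.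
Qed.

Lemma perturbed_sol_exists : exists xs, sol' xs.
Proof.
have [x0' fx0' x0'R] := perturbed_near_x0.
have Kcl : closed2 K by case: Kproper => _ [_ [_ []]].
pose S := feasible' `&` [set z | dotv (c + dc) z <= dotv (c + dc) x0'].
have [|||xs [fxs xsx0'] xsmin] := linear_min_attained (S := S) (c + dc) (M := Rsol).
- by apply: closed2I; [exact: closed2_feasible | exact: closed2_halfspace].
- by exists x0'; split; [exact: fx0' | exact: lexx].
- by move=> z [fz zx0']; exact: norm2_perturbed_sublevel fz zx0' x0'R.
exists xs; split => // z fz; have [zx0'|] := leP (dotv (c + dc) z) (dotv (c + dc) x0').
  by apply: xsmin; split.
by move=> /ltW; exact: le_trans xsx0'.
Qed.

Lemma residual_perturbed_sol xs : sol' xs -> norm2 (A *m xs - b) <= Cresid * d.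
Proof.
move=> solxs; have [[Axs _] _] := solxs.
have -> : A *m xs = b + db - dA *m xs by rewrite -Axs mulmxDl addrK.
rewrite addrAC [b + db]addrC addrK; apply: le_trans (norm2_db_dA_le _) _.
by rewrite mulrC ler_wpM2r // lerD2l norm2_perturbed_sol.
Qed.

Lemma opt_value_upper xs : sol' xs -> dotv c xs <= opt_value K A b c + Cup * d.
Proof.
move=> solxs; have xsR := norm2_perturbed_sol solxs; case: solxs => fxs xsmin.
have dcxs : - dotv dc xs <= d * Rsol.
  rewrite -dotvNl; apply: le_trans (dotv_le _ _) _; rewrite norm2N.
  exact: ler_pM (norm2_ge0 _) (norm2_ge0 _) dc_le xsR.
have near x : feasible K A b x -> dotv c x <= dotv c x0 -> dotv c xs <= dotv c x + Cup * d.
  move=> fx cx; have xR0 := norm2_sublevel_le fx cx.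
  have [x' fx' x'x] := perturbed_restore fx xR0.
  have opt := xsmin _ fx'; rewrite !dotvDl in opt.
  have cx'x : dotv c (x' - x) <= norm2 c * (Crestore * d).
    exact: le_trans (dotv_le _ _) (ler_wpM2l (norm2_ge0 c) x'x).
  have dcx' : dotv dc x' <= d * (R0 + Crestore).
    apply: le_trans (dotv_le _ _) _.
    exact: ler_pM (norm2_ge0 _) (norm2_ge0 _) dc_le (norm2_restored_le xR0 x'x).
  by rewrite dotvBr in cx'x; rewrite /Cup; lra.
rewrite -lerBlDr; apply: opt_value_ge => x fx.
have [cx|cx] := leP (dotv c x) (dotv c x0).
  by have := near x fx cx; lra.
by have := near x0 (conj Ax0 K_x0) (lexx _); lra.
Qed.

Hypothesis small_residual : 2 * beta * Cresid / r0 * d <= 1.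

Lemma opt_value_lower xs : sol' xs -> opt_value K A b c <= dotv c xs + Clow * d.
Proof.
move=> solxs; have xsR := norm2_perturbed_sol solxs.
have res := residual_perturbed_sol solxs; case: solxs => -[_ Kxs] _.
have [||x [Kx Ax] xxs] := cone_restore (target := b) (rho := Cresid * d)
  (solvable_with_rinv AB Bbeta) beta_ge0 Kxs.
- by move: small_residual; rewrite mulrAC ler_pdivrMr // mul1r mulrA.
- move=> t /andP[t0 t1].
  have -> : b - A *m ((1 - t) *: xs + t *: x0) = (1 - t) *: (b - A *m xs).
    by rewrite mulmxDr -!scalemxAr Ax0; apply/matrixP => i j; rewrite !mxE; ring.
  rewrite norm2Z ger0_norm ?subr_ge0 // norm2_distC; apply: le_trans res.
  by rewrite ler_piMl ?norm2_ge0 //; lra.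
apply: le_trans (opt_value_le (conj Ax Kx)) _.
have x0xs : norm2 (x0 - xs) <= R0 + Rsol.
  by apply: le_trans (ler_norm2D _ _) _; rewrite norm2N lerD ?norm2_x0_le.
have : dotv c (x - xs) <= Clow * d.
  apply: le_trans (dotv_le _ _) _; rewrite /Clow -mulrA ler_wpM2l ?norm2_ge0 //.
  apply: le_trans xxs _.
  have -> : beta * (Cresid * d) = beta * Cresid * d by rewrite mulrA.
  rewrite mulrAC ler_wpM2r // ler_wpM2l ?mulr_ge0 ?addr_ge0 // lerD2r ler_wpM2l //.
  by rewrite divr_ge0 // ltW.
by rewrite dotvBr; lra.
Qed.

Lemma eps_opt_perturbed_sol xs : sol' xs ->
  `|eps_opt K A b c xs| <= Num.max Cup Clow * d.
Proof.
move=> solxs; have up := opt_value_upper solxs; have low := opt_value_lower solxs.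
have : Cup * d <= Num.max Cup Clow * d by rewrite ler_wpM2r // le_max lexx.
have : Clow * d <= Num.max Cup Clow * d by rewrite ler_wpM2r // le_max lexx orbT.
by rewrite /eps_opt ler_norml => ? ?; apply/andP; split; lra.
Qed.

End Perturbation.

Lemma perturbation_bounds : exists eps0 C1 C2 : R, [/\ 0 < eps0, 0 <= C1, 0 <= C2 &
  forall dA db dc, opnorm dA + norm2 db + norm2 dc <= eps0 ->
    (exists xs, sol_set K (A + dA) (b + db) (c + dc) xs) /\
    forall xs, sol_set K (A + dA) (b + db) (c + dc) xs ->
      `|eps_opt K A b c xs| <= C1 * (opnorm dA + norm2 db + norm2 dc) /\
      norm2 (A *m xs - b) <= C2 * (opnorm dA + norm2 db + norm2 dc)].
Proof.
have R00 := R0_ge0; have r00 := ltW r0_gt0; have r10 := ltW r1_gt0.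
have b0 := beta_ge0.
pose k1 := 4 * beta * (1 + R0) / r0; pose k2 := 4 * (1 + norm2 y0) / r1.
pose k3 := 2 * beta * Cresid / r0.
have k10 : 0 <= k1 by rewrite /k1 divr_ge0 // !mulr_ge0 // addr_ge0.
have k20 : 0 <= k2 by rewrite /k2 divr_ge0 // mulr_ge0 // addr_ge0 ?norm2_ge0.
have k30 : 0 <= k3 by rewrite /k3 divr_ge0 // !mulr_ge0 // addr_ge0.
pose s := 1 + (2 * beta + k1 + k2 + k3).
have s_gt0 : 0 < s by rewrite /s; lra.
exists s^-1, (Num.max Cup Clow), Cresid; split.
- by rewrite invr_gt0.
- rewrite le_max; apply/orP; left; have := mulr_ge0 (norm2_ge0 c) Crestore_ge0.
  by have := Rsol_ge0; have := Crestore_ge0; rewrite /Cup; lra.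
- by have := Rsol_ge0; rewrite /Cresid; lra.
move=> dA db dc; set d := _ + _ + _ => ds.
have := opnorm_ge0 dA; have := norm2_ge0 db; have := norm2_ge0 dc => ? ? ?.
have dA_le : opnorm dA <= d by rewrite /d; lra.
have db_le : norm2 db <= d by rewrite /d; lra.
have dc_le : norm2 dc <= d by rewrite /d; lra.
have small k : k <= s -> k * d <= 1.
  by move=> ks; apply: mul_le1_of_le_inv s_gt0 _ ks ds; rewrite /d; lra.
have d1 : d <= 1 by rewrite -[d]mul1r small // /s; lra.
have sb : 2 * beta * d <= 1 by apply: small; rewrite /s; lra.
have s1 : k1 * d <= 1 by apply: small; rewrite /s; lra.
have s2 : k2 * d <= 1 by apply: small; rewrite /s; lra.
have s3 : k3 * d <= 1 by apply: small; rewrite /s; lra.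
split; first exact: (perturbed_sol_exists (d := d)).
move=> xs solxs; split.
  exact: (eps_opt_perturbed_sol (dA := dA) (db := db) (dc := dc) (d := d)).
exact: (residual_perturbed_sol (dA := dA) (db := db) (dc := dc) (d := d)).
Qed.

End Slater.

Section Distances.
Variables (R : realType) (n : nat).

Lemma xminus_mem (K : set 'cV[R]_n) x : K x -> xminus K x = 0.
Proof.
move=> Kx; apply/eqP; rewrite subr_eq0; apply/eqP/esym/xget_unique.
  by split=> // w _; rewrite subrr norm2_0 norm2_ge0.
move=> z [_ /(_ x Kx)]; rewrite subrr norm2_0 => /norm2_le0/eqP.
by rewrite subr_eq0 eq_sym => /eqP.
Qed.

Lemma poweR_dist_set_le (X Y : set 'cV[R]_n) y p : Y y -> 0 <= p ->
  (dist_set X Y `^ p <= dist_pt y X `^ p)%E.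
Proof.
move=> Yy p0; have ge0 (S : set (\bar R)) : (forall e, S e -> 0 <= e)%E -> (0 <= ereal_inf S)%E.
  by move=> S0; apply: le_ereal_inf_tmp.
apply: gt0_ler_poweR => //.
- rewrite in_itv /= leey andbT; apply: ge0 => _ [x _ [z _ <-]]; exact: norm2_ge0.
- rewrite in_itv /= leey andbT; apply: ge0 => _ [z _ <-]; exact: norm2_ge0.
apply: le_ereal_inf_tmp => _ [z Xz <-]; apply: ereal_inf_lbound.
by exists z => //; exists y => //; rewrite norm2_distC.
Qed.

End Distances.

Unset Implicit Arguments.

Theorem theorem2 (R : realType) (m n : nat) (K : set 'cV[R]_n)
  (A : 'M[R]_(m, n)) (b : 'cV[R]_m) (c : 'cV[R]_n) :
  proper_cone K ->
  (forall y : 'cV[R]_m, exists x : 'cV[R]_n, A *m x = y) ->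
  (exists x0, interior2 K x0 /\ A *m x0 = b) ->
  (exists y0 : 'cV[R]_m, interior2 (dual_cone K) (c - A^T *m y0)) ->
  exists eps0 : R, 0 < eps0 /\
  forall eps : R, 0 < eps -> eps <= eps0 ->
  exists cbar : R,
    (forall (dA : 'M[R]_(m, n)) (db : 'cV[R]_m) (dc : 'cV[R]_n),
       opnorm dA + norm2 db + norm2 dc <= eps ->
       forall xs, sol_set K (A + dA) (b + db) (c + dc) xs ->
         Num.max (eps_opt K A b c xs) (norm2 (A *m xs - b))
           <= cbar * (opnorm dA + norm2 db + norm2 dc)) /\
    (forall (c1 c2 c3 p : R), 0 <= c1 -> 0 <= c2 -> 0 <= c3 -> 0 < p ->
       (forall x : 'cV[R]_n,
          (dist_pt x (sol_set K A b c) `^ p <=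
            (c1 * `|eps_opt K A b c x| + c2 * norm2 (A *m x - b)
             + c3 * norm2 (xminus K x))%:E)%E) ->
       exists c1' c2' c3' : R, [/\ 0 <= c1', 0 <= c2', 0 <= c3' &
         forall (dA : 'M[R]_(m, n)) (db : 'cV[R]_m) (dc : 'cV[R]_n),
           opnorm dA + norm2 db + norm2 dc <= eps ->
           (dist_set (sol_set K A b c) (sol_set K (A + dA) (b + db) (c + dc)) `^ p
             <= (c1' * norm2 dc + c2' * opnorm dA + c3' * norm2 db)%:E)%E]).
Proof.
move=> Kp Asurj [x0 [[r0 r0_gt0 ball_x0] Ax0]] [y0 [r1 r1_gt0 ball_s0]].
have [B AB] := surjective_mx_rinv Asurj.
have [beta beta0 Bbeta] := mulmx_norm2_bounded B.
have [eps0 [C1 [C2 [eps0_gt0 C10 C20 bounds]]]] :=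
  perturbation_bounds Kp r0_gt0 r1_gt0 ball_x0 Ax0 ball_s0 AB beta0 Bbeta.
exists eps0; split => // eps _ eps_le.
have d_ge0 (dA : 'M[R]_(m, n)) (db : 'cV[R]_m) (dc : 'cV[R]_n) :
    0 <= opnorm dA + norm2 db + norm2 dc.
  by rewrite !addr_ge0 ?opnorm_ge0 ?norm2_ge0.
exists (Num.max C1 C2); split => [dA db dc small xs solxs|].
  have [epsC resC] := (bounds dA db dc (le_trans small eps_le)).2 xs solxs.
  rewrite ge_max (le_trans (ler_norm _) (le_trans epsC _)) ?(le_trans resC) //.
    by rewrite ler_wpM2r // le_max lexx orbT.
  by rewrite ler_wpM2r // le_max lexx.
move=> c1 c2 c3 p c10 c20 c30 p_gt0 errbound.
pose C := c1 * C1 + c2 * C2; have C0 : 0 <= C by rewrite addr_ge0 ?mulr_ge0.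
exists C, C, C; split => // dA db dc small.
have [[xs solxs] boundsxs] := bounds dA db dc (le_trans small eps_le).
have [epsC resC] := boundsxs xs solxs.
apply: le_trans (poweR_dist_set_le _ solxs (ltW p_gt0)) _.
apply: le_trans (errbound xs) _; have [[_ Kxs] _] := solxs.
rewrite xminus_mem // norm2_0 mulr0 addr0 lee_fin.
have := ler_wpM2l c10 epsC; have := ler_wpM2l c20 resC; rewrite /C; lra.
Qed.
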